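(* For a nonzero integer $k$ let $$P_k(t)=k-3kt+5kt^2-7kt^3+(8k+1)t^4-7kt^5+5kt^6-3kt^7+kt^8,$$ the Alexander polynomial of the 2-bridge knot $K([2,2,2,2k,-2,-2,-2,-2])$. Then: (1) if $k\in\{1,2\}$, no zero of $P_k$ is real or of modulus $1$; (2) if $k\in\{3,4,5,6\}$, $P_k$ has exactly four zeros of modulus $1$ (all non-real) and four non-real zeros not of modulus $1$; (3) if $k\ge7$, all eight zeros of $P_k$ have modulus $1$; (4) if $k<0$, $P_k$ has exactly two real zeros and six non-real zeros of modulus $1$. In particular $P_k$ has no real zero when $k>0$. *)

From HB Require Import structures.
From mathcomp Require Import all_boot all_order all_algebra all_field.
Set Implicit Arguments. Unset Strict Implicit. Unset Printing Implicit Defensive.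
Import Order.TTheory GRing.Theory Num.Theory.
Local Open Scope ring_scope.

Definition Pk (k : int) : {poly algC} :=
  Poly [seq (c%:~R : algC) | c <- [:: k; -3 * k; 5 * k; -7 * k; 8 * k + 1;
                                       -7 * k; 5 * k; -3 * k; k]].

(* P_k is palindromic of degree 8, so for t <> 0 we have
   P_k(t) = t^4 Q_k(t + 1/t) with the trace polynomial
   Q_k(x) = 1 + k x (x - 2) (x^2 - x - 1) of degree 4 and leading
   coefficient k.  Writing Q_k = k prod_i (x - x_i) over algC, each root x_i
   splits into the two roots z, 1/z of t^2 - x_i t + 1, and these eight
   numbers are the zeros of P_k.  The nature of z is read off its trace
   x = z + 1/z:
   - x not real                            ->  z not real, |z| <> 1;
   - x real, -2 < x < 2 (x "elliptic")     ->  z not real, |z| = 1;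
   - x real, x > 2      (x "hyperbolic")   ->  z real, |z| <> 1.
   The file first proves a few generic facts on sequences and polynomials,
   then locates the real roots of Q_c over an arbitrary real field (sign
   changes, sum-of-squares bounds), then proves the trichotomy above, and
   finally, for each range of k, counts the roots of Q_k of each kind, using
   the intermediate value theorem in the real closed field algR and the
   conjugation symmetry of Q_k.  Every count over the zeros of P_k is twice
   the corresponding count over the roots of Q_k, which gives the theorem. *)
From HB Require Import structures.
From mathcomp Require Import all_boot all_order all_algebra all_field.
From mathcomp Require Import polyrcf.
From mathcomp Require Import ring lra zify.
Import Order.TTheory GRing.Theory Num.Theory.
Set Implicit Arguments.
Unset Strict Implicit.
Unset Printing Implicit Defensive.
Local Open Scope ring_scope.

(* Two polynomials over a number domain agreeing off 0 are equal: their
   difference would have infinitely many roots 1, 2, 3, .... *)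
Lemma poly_eq_off0 (R : numDomainType) (p q : {poly R}) :
  (forall t, t != 0 -> p.[t] = q.[t]) -> p = q.
Proof.
move=> pq; apply/eqP; rewrite -subr_eq0; apply/negPn/negP => pq0.
pose ts := [seq i.+1%:R : R | i <- iota 0 (size (p - q))].
have roots_ts : all (root (p - q)) ts.
  by apply/allP => _ /mapP[i _ ->]; rewrite rootE !hornerE pq ?subrr ?pnatr_eq0.
have uniq_ts : uniq ts.
  by rewrite map_inj_uniq ?iota_uniq // => i j /eqP; rewrite eqr_nat => /eqP[].
by have := max_poly_roots pq0 roots_ts uniq_ts; rewrite size_map size_iota ltnn.
Qed.

Lemma perm_of_subset_uniq (T : eqType) (s t : seq T) :
  uniq t -> {subset t <= s} -> (size s <= size t)%N -> perm_eq s t.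
Proof.
move=> uniq_t sub_ts size_st; have [_ mem_ts] := uniq_min_size uniq_t sub_ts size_st.
by apply: uniq_perm (leq_size_uniq uniq_t sub_ts size_st) uniq_t _ => x; rewrite mem_ts.
Qed.

Lemma count_ge2 (T : eqType) (P : pred T) (s : seq T) a b :
  a != b -> a \in s -> b \in s -> P a -> P b -> (2 <= count P s)%N.
Proof.
move=> ab a_in b_in Pa Pb; rewrite -size_filter.
apply: (uniq_leq_size (s1 := [:: a; b])) => [|z]; first by rewrite /= inE ab.
by rewrite !inE mem_filter => /orP[]/eqP->; rewrite ?Pa ?Pb.
Qed.

Lemma prod_ge_pow (R : numDomainType) (T : eqType) (c : R) (F : T -> R) (s : seq T) :
  0 <= c -> {in s, forall x, c <= F x} -> c ^+ size s <= \prod_(x <- s) F x.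
Proof.
move=> c_ge0; elim: s => [|x s IH] F_ge; first by rewrite big_nil.
rewrite big_cons exprS ler_pM ?exprn_ge0 ?F_ge ?mem_head // IH // => y y_in.
by rewrite F_ge // inE y_in orbT.
Qed.

Definition trace_fun {R : comNzRingType} (c x : R) : R :=
  1 + c * (x * (x - 2) * (x ^+ 2 - x - 1)).

Definition trace_poly {R : comNzRingType} (c : R) : {poly R} :=
  Poly [:: 1; 2 * c; c; -3 * c; c].

Lemma horner_trace_poly (R : comNzRingType) (c x : R) :
  (trace_poly c).[x] = trace_fun c x.
Proof. by rewrite /trace_poly horner_Poly /= /trace_fun; ring. Qed.

Lemma rmorph_trace_fun (R S : comNzRingType) (f : {rmorphism R -> S}) (c x : R) :
  f (trace_fun c x) = trace_fun (f c) (f x).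
Proof. by rewrite /trace_fun !(rmorphD, rmorphN, rmorphM, rmorphXn, rmorph_nat, rmorph1). Qed.

Lemma trace_poly_lead {R : idomainType} {c : R} : c != 0 ->
  lead_coef (trace_poly c) = c /\ size (trace_poly c) = 5%N.
Proof.
move=> c_neq0; have coefs : trace_poly c = [:: 1; 2 * c; c; -3 * c; c] :> seq R.
  by apply: (PolyK (c := 0)).
by rewrite /lead_coef coefs.
Qed.

Lemma horner_Pk (k : int) (t : algC) : t != 0 ->
  (Pk k).[t] = t ^+ 4 * trace_fun (k%:~R) (t + t^-1).
Proof. by move=> t_neq0; rewrite /Pk horner_Poly /= /trace_fun !intrM !intrD /=; field. Qed.

Section RealTraceRoots.
Variable R : realFieldType.
Implicit Types c y : R.

(* For c > 0 every real root lies in (-1, 2): outside, x (x-2) (x^2-x-1) >= 0. *)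
Lemma trace_root_range c y : 0 < c -> trace_fun c y = 0 -> -1 < y < 2.
Proof.
rewrite /trace_fun => c_gt0 root_y.
have [y_ge2|] := leP 2 y.
  suff : 0 <= y * (y - 2) * (y ^+ 2 - y - 1) by nra.
  by apply: mulr_ge0; nra.
have [y_le|] := leP y (-1); last by move=> *; apply/andP.
suff : 0 <= y * (y - 2) * (y ^+ 2 - y - 1) by nra.
by apply: mulr_ge0; nra.
Qed.

(* For 0 < c <= 2 there is no real root: 1 + 2 x (x-2) (x^2-x-1) is a
   positive sum of squares. *)
Lemma trace_no_root_small c y : 0 < c <= 2 -> trace_fun c y != 0.
Proof.
rewrite /trace_fun => /andP[c_gt0 c_le2]; apply/eqP => root_y.
have : 0 < 2 * (y * (y - 2) * (y ^+ 2 - y - 1)) + 1.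
  have -> : 2 * (y * (y - 2) * (y ^+ 2 - y - 1)) + 1 =
     2 * (y ^+ 2 - 3 / 2 * y - 2 / 3) ^+ 2 + y ^+ 2 / 6 + 1 / 9 by field.
  by have := sqr_ge0 (y ^+ 2 - 3 / 2 * y - 2 / 3); have := sqr_ge0 y; lra.
nra.
Qed.

(* For 0 < c <= 6 there is no nonnegative real root; on (3/2, 2) this uses
   the certificate 1 + 6 x (x-2) (x^2-x-1) > (x - 31/17)^2 (6x^2 + ...). *)
Lemma trace_no_nonneg_root c y : 0 < c <= 6 -> 0 <= y -> trace_fun c y != 0.
Proof.
rewrite /trace_fun => /andP[c_gt0 c_le6] y_ge0; apply/eqP => root_y.
have [y_ge2|y_lt2] := leP 2 y.
  suff : 0 <= y * (y - 2) * (y ^+ 2 - y - 1) by nra.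
  by apply: mulr_ge0; nra.
have [y_le|y_gt] := leP y (3 / 2).
  suff : 0 <= y * (y - 2) * (y ^+ 2 - y - 1) by nra.
  by apply: mulr_le0; [apply: mulr_ge0_le0|]; nra.
have : 0 <= (y - 31 / 17) ^+ 2 * (6 * y ^+ 2 + 66 / 17 * y + 60 / 289).
  by apply: mulr_ge0; [exact: sqr_ge0 | nra].
nra.
Qed.

End RealTraceRoots.

Definition elliptic (x : algC) := (x \in Num.real) && (-2 < x < 2).
Definition hyperbolic (x : algC) := (x \in Num.real) && (2 < x).
Definition admissible (x : algC) :=
  [|| x \notin Num.real, elliptic x | hyperbolic x].

Lemma elliptic_algR (y : algR) : elliptic (algRval y) = (-2 < y < 2).
Proof. by rewrite /elliptic algRvalP. Qed.

Lemma hyperbolic_algR (y : algR) : hyperbolic (algRval y) = (2 < y).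
Proof. by rewrite /hyperbolic algRvalP. Qed.

Lemma elliptic_not_hyperbolic x : elliptic x -> ~~ hyperbolic x.
Proof.
case/andP=> _ /andP[_ x_lt2]; apply/negP => /andP[_ /(lt_trans x_lt2)].
by rewrite ltxx.
Qed.

Lemma algR_of_real {x : algC} : x \in Num.real -> exists a : algR, x = algRval a.
Proof. by move=> xR; exists (in_algR xR). Qed.

Section ReciprocalPair.
Variables z w : algC.
Hypothesis zw1 : z * w = 1.

Let z_neq0 : z != 0.
Proof. by apply: contra_eq_neq zw1 => ->; rewrite mul0r eq_sym oner_eq0. Qed.

Let w_inv : w = z^-1.
Proof. by apply: (mulfI z_neq0); rewrite zw1 divff. Qed.

(* If z were real, or |z| = 1 (so that w = conj z), the trace would be real. *)
Lemma recip_nonreal_kind : z + w \notin Num.real ->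
  (z \notin Num.real) && (`|z| != 1).
Proof.
move=> xNR; apply/andP; split; apply: contra xNR.
  by move=> zR; rewrite w_inv rpredD ?rpredV.
move=> /eqP z1; have -> : w = z^* by apply: (mulfI z_neq0); rewrite zw1 -normCK z1 expr1n.
by rewrite CrealE rmorphD /= conjCK addrC.
Qed.

(* For a real trace, conj z is again a root of t^2 - (z+w) t + 1. *)
Lemma recip_conj : z + w \in Num.real -> z^* = z \/ z^* = w.
Proof.
move=> /CrealP; set x := z + w => xR.
have conj_root : z^* ^+ 2 - x * z^* + 1 = 0.
  have : z ^+ 2 - x * z + 1 = 0 by rewrite /x -zw1; ring.
  move/(congr1 Num.conj); rewrite rmorph0 => <-.
  by rewrite rmorphD rmorphB rmorphXn rmorphM /= xR rmorph1.
have : (z^* - z) * (z^* - w) = 0 by rewrite -conj_root /x -zw1; ring.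
by move/eqP; rewrite mulf_eq0 !subr_eq0 => /orP[]/eqP; [left|right].
Qed.

(* A real z has trace of modulus >= 2 (AM-GM), and |z| = 1 would force the
   excluded trace +-2. *)
Lemma recip_real_kind : z \in Num.real -> admissible (z + w) ->
  hyperbolic (z + w) && (`|z| != 1).
Proof.
move=> zR; have wR : w \in Num.real by rewrite w_inv rpredV.
have [a za] := algR_of_real zR; have [b wb] := algR_of_real wR.
have ab1 : a * b = 1 by apply: val_inj; rewrite /= -za -wb.
rewrite za wb -(rmorphD algRval) /admissible elliptic_algR hyperbolic_algR algRvalP /=.
have not_elliptic : ~~ (-2 < a + b < 2).
  by apply/negP => /andP[? ?]; have := sqr_ge0 (a - b); nra.
rewrite (negPf not_elliptic) /= => x_gt2; rewrite x_gt2 /=; apply/eqP => a1.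
have : a ^+ 2 = 1.
  have a1R : `|a| = 1 :> algR by apply: val_inj.
  by rewrite -(real_normK (num_real a)) a1R expr1n.
nra.
Qed.

(* A non-real z with real trace has w = conj z, hence |z| = 1 and
   |z + w| <= 2 by the triangle inequality. *)
Lemma recip_unit_kind : z \notin Num.real -> z + w \in Num.real ->
  admissible (z + w) -> elliptic (z + w) && (`|z| == 1).
Proof.
move=> zNR xR; have [zz|zw] := recip_conj xR.
  by move: zNR; rewrite CrealE zz eqxx.
have z1 : `|z| = 1.
  have : `|z| ^+ 2 = 1 by rewrite normCK zw zw1.
  move/eqP; rewrite sqrf_eq1 => /orP[/eqP //|/eqP zN1].
  by have := normr_ge0 z; rewrite zN1 ler0N1.
have x_le2 : `|z + w| <= 2.
  by rewrite -zw (le_trans (ler_normD _ _)) // norm_conjC z1.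
rewrite z1 eqxx andbT /admissible xR /= => /orP[// | /andP[_ x_gt2]].
by have := lt_le_trans x_gt2 (le_trans (real_ler_norm xR) x_le2); rewrite ltxx.
Qed.

Lemma recip_kind : admissible (z + w) ->
  (z \in Num.real) = hyperbolic (z + w) /\ (`|z| == 1) = elliptic (z + w).
Proof.
move=> adm; have [xR|xNR] := boolP (z + w \in Num.real).
  have [zR|zNR] := boolP (z \in Num.real).
    have /andP[hyp z1] := recip_real_kind zR adm.
    rewrite hyp (negPf z1); split => //.
    by apply/esym/negP => /elliptic_not_hyperbolic; rewrite hyp.
  have /andP[ell z1] := recip_unit_kind zNR xR adm.
  by rewrite ell z1 (negPf (elliptic_not_hyperbolic ell)).
have /andP[zNR z1] := recip_nonreal_kind xNR.
by rewrite /hyperbolic /elliptic (negPf xNR) (negPf zNR) (negPf z1).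
Qed.

End ReciprocalPair.

Definition recip_rootp (x : algC) := (x + sqrtC (x ^+ 2 - 4)) / 2.
Definition recip_rootm (x : algC) := (x - sqrtC (x ^+ 2 - 4)) / 2.

Lemma recip_roots_sum x : recip_rootp x + recip_rootm x = x.
Proof. by rewrite /recip_rootp /recip_rootm; field. Qed.

Lemma recip_roots_prod x : recip_rootp x * recip_rootm x = 1.
Proof.
rewrite /recip_rootp /recip_rootm; have := sqrtCK (x ^+ 2 - 4).
set s := sqrtC _ => s2.
have -> : (x + s) / 2 * ((x - s) / 2) = (x ^+ 2 - s ^+ 2) / 4 by field.
by rewrite s2; field.
Qed.

Lemma recip_roots_kind x : admissible x ->
  {in [:: recip_rootp x; recip_rootm x], forall z,
    (z \in Num.real) = hyperbolic x /\ (`|z| == 1) = elliptic x}.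
Proof.
move=> adm z; rewrite !inE => /orP[]/eqP->.
  by have := @recip_kind _ _ (recip_roots_prod x); rewrite recip_roots_sum; apply.
have prod_mp : recip_rootm x * recip_rootp x = 1 by rewrite mulrC recip_roots_prod.
by have := @recip_kind _ _ prod_mp; rewrite addrC recip_roots_sum; apply.
Qed.

Definition lift_roots (xs : seq algC) : seq algC :=
  flatten [seq [:: recip_rootp x; recip_rootm x] | x <- xs].

Lemma lift_roots_cons x xs :
  lift_roots (x :: xs) = recip_rootp x :: recip_rootm x :: lift_roots xs.
Proof. by []. Qed.

Lemma size_lift_roots xs : size (lift_roots xs) = (size xs).*2.
Proof. by elim: xs => // x xs IH; rewrite lift_roots_cons /= IH. Qed.

Lemma prod_lift_roots xs t :
  \prod_(z <- lift_roots xs) (t - z) = \prod_(x <- xs) (t ^+ 2 - x * t + 1).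
Proof.
elim: xs => [|x xs IH]; first by rewrite !big_nil.
rewrite lift_roots_cons !big_cons IH mulrA; congr (_ * _).
by rewrite -[in RHS](recip_roots_sum x) -(recip_roots_prod x); ring.
Qed.

Lemma count_lift_roots (f : bool -> bool -> bool) xs : all admissible xs ->
  count (fun z => f (z \in Num.real) (`|z| == 1)) (lift_roots xs) =
  (count (fun x => f (hyperbolic x) (elliptic x)) xs).*2.
Proof.
elim: xs => // x xs IH /andP[adm_x adm_xs]; rewrite lift_roots_cons /= IH //.
have [rp_r rp_u] := recip_roots_kind adm_x (mem_head _ _).
have [rm_r rm_u] := recip_roots_kind adm_x (mem_last _ [:: _]).
by rewrite rp_r rp_u rm_r rm_u; case: (f _ _); rewrite //= doubleS.
Qed.

Lemma all_lift_roots (f : bool -> bool -> bool) xs : all admissible xs ->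
  all (fun z => f (z \in Num.real) (`|z| == 1)) (lift_roots xs) =
  all (fun x => f (hyperbolic x) (elliptic x)) xs.
Proof.
move=> adm; rewrite !all_count count_lift_roots // size_lift_roots.
exact: (inj_eq double_inj).
Qed.

Definition trace_roots (k : int) : seq algC :=
  sval (closed_field_poly_normal (trace_poly (k%:~R : algC))).

Section TraceRoots.
Variable k : int.
Hypothesis k_neq0 : k != 0.

Local Notation kC := (k%:~R : algC).
Local Notation kR := (k%:~R : algR).
Local Notation xs := (trace_roots k).

Let kC_neq0 : kC != 0. Proof. by rewrite intr_eq0. Qed.

Lemma trace_roots_factor : trace_poly kC = kC *: \prod_(x <- xs) ('X - x%:P).
Proof.
have [lead _] := trace_poly_lead kC_neq0.
rewrite /trace_roots; case: closed_field_poly_normal => /= rs {1}->.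
by rewrite lead.
Qed.

Lemma size_trace_roots : size xs = 4%N.
Proof.
have [_ size5] := trace_poly_lead kC_neq0.
have := congr1 (fun p : {poly algC} => size p) trace_roots_factor.
by rewrite size_scale // size_prod_XsubC size5 => -[].
Qed.

Lemma trace_fun_roots u : trace_fun kC u = kC * \prod_(x <- xs) (u - x).
Proof.
rewrite -horner_trace_poly trace_roots_factor hornerZ horner_prod.
by under eq_bigr do rewrite hornerXsubC.
Qed.

Lemma mem_trace_roots u : (u \in xs) = (trace_fun kC u == 0).
Proof.
rewrite trace_fun_roots mulf_eq0 (negPf kC_neq0) /= -root_prod_XsubC rootE horner_prod.
by under eq_bigr do rewrite hornerXsubC.
Qed.

Lemma mem_trace_roots_algR (y : algR) : (algRval y \in xs) = (trace_fun kR y == 0).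
Proof.
by rewrite mem_trace_roots -(rmorph_int algRval) -rmorph_trace_fun fmorph_eq0.
Qed.

Lemma real_trace_root x : x \in xs -> x \in Num.real ->
  exists2 y : algR, x = algRval y & trace_fun kR y = 0.
Proof.
move=> x_root /algR_of_real[y x_y]; exists y => //.
by apply/eqP; rewrite -mem_trace_roots_algR -x_y.
Qed.

(* Q_k has integer coefficients, so its roots are closed under conjugation. *)
Lemma trace_roots_conj x : x \in xs -> x^* \in xs.
Proof.
rewrite !mem_trace_roots => /eqP root_x.
by rewrite -(rmorph_int Num.conj k) -rmorph_trace_fun root_x rmorph0.
Qed.

Lemma trace_root_between (a b : algR) : a <= b ->
  trace_fun kR a * trace_fun kR b < 0 -> exists2 y : algR, a < y < b & algRval y \in xs.
Proof.
rewrite -!horner_trace_poly => le_ab /(poly_ivtoo le_ab)[y].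
by rewrite in_itv /= rootE horner_trace_poly -mem_trace_roots_algR; exists y.
Qed.

Lemma trace_roots_increasing (y1 y2 y3 y4 : algR) :
  y1 < y2 -> y2 < y3 -> y3 < y4 -> all (fun y => algRval y \in xs) [:: y1; y2; y3; y4] ->
  perm_eq xs [seq algRval y | y <- [:: y1; y2; y3; y4]].
Proof.
move=> lt12 lt23 lt34 /allP roots_ys; apply: perm_of_subset_uniq.
- rewrite (map_inj_uniq val_inj); apply: lt_sorted_uniq => /=.
  by rewrite lt12 lt23 lt34.
- by move=> _ /mapP[y y_in ->]; apply: roots_ys.
- by rewrite size_trace_roots.
Qed.

Lemma real_trace_root_pos x : 0 < k -> x \in xs -> x \in Num.real -> elliptic x.
Proof.
move=> k_gt0 x_root xR; have [y -> root_y] := real_trace_root x_root xR.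
have kR_gt0 : 0 < kR by rewrite ltr0z.
have /andP[y_gt y_lt] := trace_root_range kR_gt0 root_y.
by rewrite elliptic_algR; apply/andP; split; lra.
Qed.

Lemma trace_roots_not_hyperbolic : 0 < k -> all (fun x => ~~ hyperbolic x) xs.
Proof.
move=> k_gt0; apply/allP => x x_root; apply/negP => /[dup] /andP[xR _].
by apply/negP/elliptic_not_hyperbolic/real_trace_root_pos.
Qed.

Lemma trace_roots_small : k \in [:: 1; 2] ->
  all (fun x => ~~ hyperbolic x && ~~ elliptic x) xs.
Proof.
move=> k12; have kR_range : 0 < kR <= 2.
  have [k_gt0 k_le2] : 0 < k /\ k <= 2 by move: k12; rewrite !inE => /orP[]/eqP->.
  by rewrite ltr0z (ler_int algR k 2) k_gt0.
apply/allP => x x_root; rewrite /hyperbolic /elliptic.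
case: (boolP (x \in Num.real)) => //= xR.
have [y _ root_y] := real_trace_root x_root xR.
by move: (trace_no_root_small y kR_range); rewrite root_y eqxx.
Qed.

Lemma real_trace_root_neg x : 0 < k <= 6 -> x \in xs -> x \in Num.real -> x < 0.
Proof.
move=> /andP[k_gt0 k_le6] x_root xR; have [y -> root_y] := real_trace_root x_root xR.
have kR_range : 0 < kR <= 6 by rewrite ltr0z (ler_int algR k 6) k_gt0.
have : y < 0.
  rewrite ltNge; apply/negP => y_ge0.
  by move: (trace_no_nonneg_root kR_range y_ge0); rewrite root_y eqxx.
by rewrite -(rmorph0 algRval).
Qed.

(* For 3 <= k <= 6 some root of Q_k is not real: four negative real roots
   would give 1 = Q_k(2) = k prod_i (2 - x_i) >= 3 * 2^4. *)
Lemma trace_roots_nonreal : 3 <= k <= 6 -> exists2 w, w \in xs & w \notin Num.real.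
Proof.
move=> /andP[k_ge3 k_le6]; have k_range : 0 < k <= 6 by apply/andP; split => //; lia.
apply/hasP; apply: contraT; rewrite -all_predC => /allP all_real.
have prod_ge : 2 ^+ 4 <= \prod_(x <- xs) (2 - x).
  rewrite -size_trace_roots prod_ge_pow // => x x_root.
  by rewrite lerDl oppr_ge0 ltW // real_trace_root_neg // (negPn (all_real x x_root)).
have trace_at2 : trace_fun kC 2 = 1 by rewrite /trace_fun subrr !(mulr0, mul0r) addr0.
have kC_ge3 : 3 <= kC by rewrite (ler_int algC 3 k).
have := ler_pM (ler0n _ 3) (exprn_ge0 4 (ler0n _ 2)) kC_ge3 prod_ge.
by rewrite -trace_fun_roots trace_at2 -natrX -natrM lern1.
Qed.

(* 3 <= k <= 6: two negative real roots (sign changes at -1, -1/3, 0), and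
   exactly two non-real ones, a non-real root coming with its conjugate. *)
Lemma trace_roots_mid : 3 <= k <= 6 ->
  count elliptic xs = 2%N /\ count (fun x => ~~ elliptic x && ~~ hyperbolic x) xs = 2%N.
Proof.
move=> /[dup] k_range /andP[k_ge3 _]; have k_gt0 : 0 < k by lia.
have kR_ge3 : 3 <= kR by rewrite (ler_int algR 3 k).
have [y1 /andP[gt1 lt1] r1] := trace_root_between (a := -1) (b := -1/3)
  ltac:(lra) ltac:(rewrite /trace_fun; nra).
have [y2 /andP[gt2 lt2] r2] := trace_root_between (a := -1/3) (b := 0)
  ltac:(lra) ltac:(rewrite /trace_fun; nra).
have real2 : (2 <= count (fun x => x \in Num.real) xs)%N.
  apply: (count_ge2 _ r1 r2 (algRvalP _) (algRvalP _)).
  by rewrite (inj_eq val_inj) lt_eqF // (lt_trans lt1 gt2).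
have [w w_root wNR] := trace_roots_nonreal k_range.
have nonreal2 : (2 <= count (predC (fun x => x \in Num.real)) xs)%N.
  apply: (count_ge2 _ w_root (trace_roots_conj w_root) wNR).
    by rewrite eq_sym -CrealE.
  by rewrite /= CrealE conjCK eq_sym -CrealE.
have real_count : count (fun x => x \in Num.real) xs = 2%N.
  by have := count_predC (fun x => x \in Num.real) xs; rewrite size_trace_roots; lia.
have nonreal_count : count (predC (fun x => x \in Num.real)) xs = 2%N.
  by have := count_predC (fun x => x \in Num.real) xs; rewrite size_trace_roots; lia.
have kind : {in xs, forall x, elliptic x = (x \in Num.real) /\ ~~ hyperbolic x}.
  move=> x x_root; case: (boolP (x \in Num.real)) => xR.
    have ell := real_trace_root_pos k_gt0 x_root xR.
    by rewrite ell elliptic_not_hyperbolic.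
  by rewrite /elliptic /hyperbolic (negPf xR).
split; first by rewrite -real_count; apply: eq_in_count => x /kind[].
by rewrite -nonreal_count; apply: eq_in_count => x /kind[-> ->]; rewrite andbT.
Qed.

(* k >= 7: four sign changes at -1, -1/3, 0, 9/5, 2 give four elliptic roots. *)
Lemma trace_roots_large : 7 <= k -> all elliptic xs.
Proof.
move=> k_ge7; have kR_ge7 : 7 <= kR by rewrite (ler_int algR 7 k).
have [y1 /andP[gt1 lt1] r1] := trace_root_between (a := -1) (b := -1/3)
  ltac:(lra) ltac:(rewrite /trace_fun; nra).
have [y2 /andP[gt2 lt2] r2] := trace_root_between (a := -1/3) (b := 0)
  ltac:(lra) ltac:(rewrite /trace_fun; nra).
have [y3 /andP[gt3 lt3] r3] := trace_root_between (a := 0) (b := 9/5)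
  ltac:(lra) ltac:(rewrite /trace_fun; nra).
have [y4 /andP[gt4 lt4] r4] := trace_root_between (a := 9/5) (b := 2)
  ltac:(lra) ltac:(rewrite /trace_fun; nra).
have perm_ys := trace_roots_increasing (y1 := y1) (y2 := y2) (y3 := y3) (y4 := y4)
  ltac:(lra) ltac:(lra) ltac:(lra) ltac:(by rewrite /= r1 r2 r3 r4).
rewrite (perm_all _ perm_ys) /= !elliptic_algR.
by apply/and5P; split => //; apply/andP; split; lra.
Qed.

(* k < 0: sign changes at -1, 0, 3/4, 2, 5/2 give three elliptic roots and
   one hyperbolic root in (2, 5/2). *)
Lemma trace_roots_neg : k < 0 ->
  [/\ all (fun x => elliptic x || hyperbolic x) xs, count hyperbolic xs = 1%N
     & count (fun x => ~~ hyperbolic x && elliptic x) xs = 3%N].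
Proof.
move=> k_lt0; have kR_le : kR <= -1 by rewrite (ler_int algR k (-1)); lia.
have [y1 /andP[gt1 lt1] r1] := trace_root_between (a := -1) (b := 0)
  ltac:(lra) ltac:(rewrite /trace_fun; nra).
have [y2 /andP[gt2 lt2] r2] := trace_root_between (a := 0) (b := 3/4)
  ltac:(lra) ltac:(rewrite /trace_fun; nra).
have [y3 /andP[gt3 lt3] r3] := trace_root_between (a := 3/4) (b := 2)
  ltac:(lra) ltac:(rewrite /trace_fun; nra).
have [y4 /andP[gt4 lt4] r4] := trace_root_between (a := 2) (b := 5/2)
  ltac:(lra) ltac:(rewrite /trace_fun; nra).
have perm_ys := trace_roots_increasing (y1 := y1) (y2 := y2) (y3 := y3) (y4 := y4)
  ltac:(lra) ltac:(lra) ltac:(lra) ltac:(by rewrite /= r1 r2 r3 r4).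
have ell (y : algR) : -2 < y < 2 -> elliptic (algRval y) && ~~ hyperbolic (algRval y).
  move=> y_range; rewrite elliptic_algR hyperbolic_algR y_range -leNgt.
  by case/andP: y_range => _ /ltW.
have /andP[e1 h1] := ell y1 ltac:(apply/andP; split; lra).
have /andP[e2 h2] := ell y2 ltac:(apply/andP; split; lra).
have /andP[e3 h3] := ell y3 ltac:(apply/andP; split; lra).
have h4 : hyperbolic (algRval y4) by rewrite hyperbolic_algR.
rewrite (perm_all _ perm_ys) !(permP perm_ys) /= e1 e2 e3 h4 (negPf h1) (negPf h2) (negPf h3).
by rewrite /= orbT.
Qed.

Lemma trace_roots_admissible : all admissible xs.
Proof.
apply/allP => x x_root; rewrite /admissible.
case: (boolP (x \in Num.real)) => //= xR.
case: (ltgtP k 0) => [k_lt0 | k_gt0 | k0].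
- by have [all_kinds _ _] := trace_roots_neg k_lt0; apply: (allP all_kinds).
- by rewrite real_trace_root_pos.
- by move: k_neq0; rewrite k0.
Qed.

Lemma Pk_factor : Pk k = kC *: \prod_(z <- lift_roots xs) ('X - z%:P).
Proof.
apply: poly_eq_off0 => t t_neq0.
rewrite horner_Pk // hornerZ horner_prod trace_fun_roots.
under [in RHS]eq_bigr do rewrite hornerXsubC.
rewrite prod_lift_roots.
have -> : \prod_(x <- xs) (t ^+ 2 - x * t + 1) = \prod_(x <- xs) (t * (t + t^-1 - x)).
  by apply: eq_bigr => x _; field.
by rewrite big_split /= big_const_seq count_predT iter_mulr_1 size_trace_roots; ring.
Qed.

End TraceRoots.

Theorem theoremC1 (k : int) (hk : k != 0) :
  exists rs : seq algC,
    [/\ size rs = 8%N,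
        Pk k = (k%:~R : algC) *: \prod_(z <- rs) ('X - z%:P)
      & [/\ ((k \in [:: 1; 2]) ->
          all (fun z => (z \notin Num.real) && (`|z| != 1)) rs),
        ((3 <= k <= 6) ->
          [/\ count (fun z => `|z| == 1) rs = 4%N,
              all (fun z => (`|z| == 1) ==> (z \notin Num.real)) rs
            & count (fun z => (`|z| != 1) && (z \notin Num.real)) rs = 4%N]),
        ((7 <= k) -> all (fun z => `|z| == 1) rs),
        ((k < 0) ->
          count (fun z => z \in Num.real) rs = 2%N /\
          count (fun z => (z \notin Num.real) && (`|z| == 1)) rs = 6%N)
      & ((0 < k) -> all (fun z => z \notin Num.real) rs)]].
Proof.
have adm := trace_roots_admissible hk.
exists (lift_roots (trace_roots k)); split.
- by rewrite size_lift_roots size_trace_roots.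
- exact: Pk_factor.
split=> [k12 | k36 | k_ge7 | k_lt0 | k_gt0].
- by rewrite (all_lift_roots (fun r u => ~~ r && ~~ u)) // trace_roots_small.
- have [ell2 other2] := trace_roots_mid hk k36.
  rewrite (count_lift_roots (fun r u => u)) // ell2.
  rewrite (count_lift_roots (fun r u => ~~ u && ~~ r)) // other2.
  rewrite (all_lift_roots (fun r u => u ==> ~~ r)) //; split => //.
  by apply/allP => x _; apply/implyP/elliptic_not_hyperbolic.
- by rewrite (all_lift_roots (fun r u => u)) // trace_roots_large.
- have [_ hyp1 ell3] := trace_roots_neg hk k_lt0.
  rewrite (count_lift_roots (fun r u => r)) // hyp1.
  by rewrite (count_lift_roots (fun r u => ~~ r && u)) // ell3.
- by rewrite (all_lift_roots (fun r u => ~~ r)) // trace_roots_not_hyperbolic.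
Qed.
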